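(* Let $H=(V,E)$ be a hypergraph on $k\ge2$ vertices and let $d\ge1$ be an integer. Then there exists a set $F\subseteq E$ of at most $kd$ hyperedges such that the hypergraph $H'=(V,E\setminus F)$ satisfies: for every integer $\alpha\ge1$, the number of distinct sets $\delta_{H'}(S)$, over $S\subseteq V$, with $|\delta_{H'}(S)|\le\alpha d$ is at most $(2k)^{2\alpha}$.
   Context: For a hypergraph $H=(V,E)$ and $S\subseteq V$, $\delta_H(S)$ is the set of hyperedges $e\in E$ that are contained in neither $S$ nor $V\setminus S$. Two cuts $S_1,S_2$ cutting exactly the same set of hyperedges are counted once. *)

From mathcomp Require Import all_boot.
Set Implicit Arguments. Unset Strict Implicit. Unset Printing Implicit Defensive.

Definition hcut (V : finType) (E : {set {set V}}) (S : {set V}) : {set {set V}} :=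
  [set e in E | ~~ (e \subset S) && ~~ (e \subset ~: S)].

Definition small_cuts (V : finType) (E : {set {set V}}) (c : nat) :
    {set {set {set V}}} :=
  [set hcut E S | S in [pred S : {set V} | #|hcut E S| <= c]].

From mathcomp Require Import all_boot.
From mathcomp Require Import zify.
Set Implicit Arguments. Unset Strict Implicit. Unset Printing Implicit Defensive.

(* Write c(C) for the number of connected components of (V, C), and call an
   edge e of G merging for C when c(e + C) < c(C).  Say that G is d-robust if
   every C \subset G has at least d (c(C) - c(G)) merging edges in G.

   Every E becomes d-robust after deleting at most k d edges: as long as some C
   violates robustness, delete its merging edges.  This costs fewer than
   d (c(C) - c(G)) edges and raises the component count to exactly c(C), and the
   component count can grow by at most k in total.

   In a d-robust G, let N(C) be the number of cuts of size at most a d that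
   avoid C, and j = c(C) - c(G).  A cut avoiding C is a union of C-components,
   up to flipping whole G-components, so N(C) <= 2^j.  If j > a, every such cut
   misses all but a d of the at least d j merging edges e, and then avoids e + C;
   double counting yields N(C) <= j/(j - a) max_e N(e + C), hence by induction
   N(C) <= 2^a 'C(j, a) <= (2k)^(2a). *)

Lemma eq_subset_in (T : finType) (e A B : {set T}) :
  {in e, forall x, (x \in A) = (x \in B)} -> (e \subset A) = (e \subset B).
Proof.
by move=> eqAB; apply/subsetP/subsetP => sub x xe; rewrite ?eqAB ?sub // -eqAB ?sub.
Qed.

Lemma sum_nat_indicator (T : finType) (A : {set T}) (P : pred T) :
  \sum_(x in A) (P x : nat) = #|[set x in A | P x]|.
Proof.
rewrite -sum1_card [RHS]big_mkcond [LHS]big_mkcond; apply: eq_bigr => x _.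
by rewrite !inE; case: (x \in A); case: (P x).
Qed.

Section Components.

Variable V : finType.
Implicit Types A B : {set {set V}}.

Definition hadj A : rel V := fun x y => [exists e in A, (x \in e) && (y \in e)].
Definition hconn A : rel V := connect (hadj A).
Definition hroot A : V -> V := root (hadj A).
Definition ncomp A : nat := #|[set hroot A x | x : V]|.

Lemma hconn_sym A : connect_sym (hadj A).
Proof.
apply: sym_connect_sym => x y; apply: eq_existsb => e.
by rewrite [(x \in e) && _]andbC.
Qed.

Lemma hconn_edge A e x y : e \in A -> x \in e -> y \in e -> hconn A x y.
Proof. by move=> eA xe ye; apply/connect1/existsP; exists e; rewrite eA xe ye. Qed.

Lemma hconn_hroot A x : hconn A x (hroot A x).
Proof. exact: connect_root. Qed.

Lemma hrootP A x y : reflect (hroot A x = hroot A y) (hconn A x y).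
Proof. exact: (rootP (hconn_sym A)). Qed.

Lemma hroot_hroot A x : hroot A (hroot A x) = hroot A x.
Proof. exact: (root_root (hconn_sym A)). Qed.

Lemma hconn_cover A B :
  (forall e x y, e \in B -> x \in e -> y \in e -> hconn A x y) ->
  subrel (hconn B) (hconn A).
Proof.
by move=> coverB; apply: connect_sub => x y /existsP[e /and3P[/coverB]]; apply.
Qed.

Lemma hconn_subset A B : A \subset B -> subrel (hconn A) (hconn B).
Proof.
by move=> sAB; apply: hconn_cover => e x y /(subsetP sAB); apply: hconn_edge.
Qed.

Lemma hroot_subrel A B x :
  subrel (hconn A) (hconn B) -> hroot B (hroot A x) = hroot B x.
Proof. by move=> sAB; apply/esym/hrootP/sAB/hconn_hroot. Qed.

Lemma hroots_subrel A B : subrel (hconn A) (hconn B) ->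
  [set hroot B x | x : V] = hroot B @: [set hroot A x | x : V].
Proof.
by move=> sAB; rewrite -imset_comp; apply: eq_imset => x /=; rewrite hroot_subrel.
Qed.

Lemma ncomp_subrel A B : subrel (hconn A) (hconn B) -> ncomp B <= ncomp A.
Proof. by move=> sAB; rewrite /ncomp (hroots_subrel sAB) leq_imset_card. Qed.

Lemma ncomp_subrel_eq A B : subrel (hconn A) (hconn B) ->
  ncomp B = ncomp A -> subrel (hconn B) (hconn A).
Proof.
move=> sAB; rewrite /ncomp (hroots_subrel sAB) => /eqP/imset_injP injB u v.
by move/hrootP=> eq_uv; apply/hrootP/injB; rewrite ?imset_f // !hroot_subrel.
Qed.

Lemma ncomp_subset A B : A \subset B -> ncomp B <= ncomp A.
Proof. by move/hconn_subset/ncomp_subrel. Qed.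

Lemma ncomp_leq_card A : ncomp A <= #|V|.
Proof. exact: leq_trans (leq_imset_card _ _) (max_card _). Qed.

End Components.

Section Cuts.

Variable V : finType.
Implicit Types (C D G M : {set {set V}}) (S : {set V}).

Lemma hcut_addb_hroot G S (b : V -> bool) :
  hcut G [set x | (x \in S) (+) b (hroot G x)] = hcut G S.
Proof.
apply/setP => e; rewrite !inE; case eG: (e \in G) => //=.
have [->|[z ze]] := set_0Vmem e; first by rewrite !sub0set.
set S' := [set x | _ (+) _]; set c := b (hroot G z).
have S'e : {in e, forall x, (x \in S') = (x \in S) (+) c}.
  by move=> x xe; rewrite inE /c; congr (_ (+) b _); apply/hrootP/(hconn_edge eG).
case: c S'e => S'e.
- rewrite (eq_subset_in (B := ~: S)); last by move=> x /S'e->; rewrite inE addbT.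
  rewrite andbC (eq_subset_in (A := ~: S') (B := S)) //.
  by move=> x /S'e; rewrite !inE => ->; rewrite addbT negbK.
- rewrite (eq_subset_in (B := S)); last by move=> x /S'e->; rewrite addbF.
  rewrite (eq_subset_in (A := ~: S') (B := ~: S)) //.
  by move=> x /S'e; rewrite !inE => ->; rewrite addbF.
Qed.

Lemma hconn_avoiding_closed G C S x y : C \subset G ->
  [disjoint hcut G S & C] -> hconn C x y -> (x \in S) = (y \in S).
Proof.
move=> sCG avoidC; apply: closed_connect => u v /existsP[e /and3P[eC ue ve]].
have : e \notin hcut G S by rewrite (disjointFl avoidC eC).
rewrite inE (subsetP sCG _ eC) /= negb_and !negbK => /orP[] /subsetP sub.
  by rewrite !sub.
by move: (sub u ue) (sub v ve); rewrite !inE => /negbTE-> /negbTE->.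
Qed.

Lemma small_cutsP G c D :
  reflect (exists2 S, D = hcut G S & #|hcut G S| <= c) (D \in small_cuts G c).
Proof.
apply: (iffP imsetP) => [[S] | [S -> cut_le]]; first by rewrite inE => ? ->; exists S.
by exists S; rewrite ?inE.
Qed.

Definition cuts_avoiding G c C : {set {set {set V}}} :=
  [set D in small_cuts G c | [disjoint D & C]].

Lemma cuts_avoiding0 G c : cuts_avoiding G c set0 = small_cuts G c.
Proof. by apply/setP => D; rewrite inE disjoints_subset setC0 subsetT andbT. Qed.

(* Flipping the G-components whose root lies in S leaves the cut unchanged and
   turns S into a union of C-components none of which contains a G-root. *)
Lemma card_cuts_avoiding_le_exp G c C :
  C \subset G -> #|cuts_avoiding G c C| <= 2 ^ (ncomp C - ncomp G).
Proof.
move=> sCG; set R := [set hroot C (hroot G x) | x : V].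
set free := [set hroot C x | x : V] :\: R.
have sRC : R \subset [set hroot C x | x : V].
  by apply/subsetP => _ /imsetP[x _ ->]; rewrite imset_f.
have ncompG_le : ncomp G <= #|R|.
  rewrite /ncomp (_ : [set hroot G x | x : V] = hroot G @: R) ?leq_imset_card //.
  rewrite -imset_comp; apply: eq_imset => x /=.
  by rewrite (hroot_subrel _ (hconn_subset sCG)) hroot_hroot.
have card_free : #|free| <= ncomp C - ncomp G.
  by rewrite cardsD (setIidPr sRC); apply: leq_sub2l.
apply: (@leq_trans #|powerset free|); last first.
  by rewrite card_powerset leq_pexp2l.
pose cut_of (Y : {set V}) := hcut G [set x | hroot C x \in Y].
apply: (@leq_trans #|cut_of @: powerset free|); last exact: leq_imset_card.
apply/subset_leq_card/subsetP => _ /setIdP[/small_cutsP[S -> _] avoidC].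
set S' := [set x | (x \in S) (+) (hroot G x \in S)].
have closedS' x y : hconn C x y -> (x \in S') = (y \in S').
  move=> xy; rewrite !inE (hconn_avoiding_closed sCG avoidC xy).
  by rewrite (hrootP _ _ _ (hconn_subset sCG xy)).
apply/imsetP; exists (free :&: S'); first by rewrite powersetE subsetIl.
rewrite -(hcut_addb_hroot G S (fun r => r \in S)) -/S'; congr hcut; apply/setP => x.
rewrite (closedS' x (hroot C x)) ?hconn_hroot // inE in_setI andbC.
have [xS' /= | //] := boolP (hroot C x \in S').
rewrite in_setD imset_f // andbT; apply/esym/imsetP => -[z _ xz].
have := closedS' _ _ (hconn_hroot C (hroot G z)).
by rewrite -xz xS' inE hroot_hroot addbb.
Qed.

Lemma cuts_avoiding_double_count G c C M :
  #|cuts_avoiding G c C| * (#|M| - c) <=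
  \sum_(e in M) #|cuts_avoiding G c (e |: C)|.
Proof.
have missed D : D \in cuts_avoiding G c C -> #|M| - c <= \sum_(e in M) (e \notin D).
  case/setIdP=> /small_cutsP[S -> cut_le] _; rewrite sum_nat_indicator.
  rewrite (_ : [set e in M | _] = M :\: hcut G S); last first.
    by apply/setP => e; rewrite !inE andbC.
  by rewrite cardsD leq_sub2l // (leq_trans _ cut_le) ?subset_leq_card ?subsetIr.
rewrite -sum_nat_const.
apply: (@leq_trans (\sum_(D in cuts_avoiding G c C) \sum_(e in M) (e \notin D))).
  exact: leq_sum.
rewrite exchange_big /=.
apply: leq_sum => e eM; rewrite sum_nat_indicator subset_leq_card //.
apply/subsetP => D /setIdP[/setIdP[Dsmall avoidC] eD]; rewrite inE Dsmall /=.
rewrite disjoints_subset setCU subsetI -!disjoints_subset disjoint_sym.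
by rewrite disjoints1 eD avoidC.
Qed.

End Cuts.

Definition cut_bound (a j : nat) : nat := 2 ^ a * 'C(maxn j a, a).

Lemma leq_exp_cut_bound a j : j <= a -> 2 ^ j <= cut_bound a j.
Proof.
by move=> le_ja; rewrite /cut_bound (maxn_idPr le_ja) binn muln1 leq_pexp2l.
Qed.

Lemma cut_bound_homo a : {homo cut_bound a : i j / i <= j}.
Proof.
move=> i j le_ij; rewrite /cut_bound leq_mul2l leq_bin2l ?orbT //.
by rewrite geq_max leq_maxr (leq_trans le_ij) ?leq_maxl.
Qed.

Lemma cut_bound_rec a j : a < j -> j * cut_bound a j.-1 = (j - a) * cut_bound a j.
Proof.
move=> lt_aj; rewrite /cut_bound (maxn_idPl (ltnW lt_aj)).
rewrite (maxn_idPl (_ : a <= j.-1)).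
  by rewrite mulnCA mul_bin_down mulnCA.
by rewrite -ltnS prednK ?(leq_ltn_trans _ lt_aj).
Qed.

Lemma leq_bin_exp n m : 'C(n, m) <= n ^ m.
Proof.
apply: leq_trans (_ : n ^_ m <= _); first by rewrite -bin_ffact leq_pmulr ?fact_gt0.
elim: m => [|m IHm]; first by rewrite ffactn0.
by rewrite ffactnSr expnSr leq_mul ?leq_subr.
Qed.

Lemma cut_bound_leq a j k : j <= k -> 0 < k -> cut_bound a j <= (2 * k) ^ (2 * a).
Proof.
move=> le_jk k_gt0; apply: leq_trans (cut_bound_homo a le_jk) _.
apply: (@leq_trans ((2 * k) ^ a)); last first.
  by apply: leq_pexp2l; rewrite ?muln_gt0 // mul2n -addnn leq_addr.
rewrite /cut_bound expnMn leq_mul2l; apply/orP; right.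
by have [_ | _] := leqP a k; rewrite ?leq_bin_exp // binn expn_gt0 k_gt0.
Qed.

(* [m / (m - a d)] decreases in [m] and equals [j / (j - a)] at [m = d j]. *)
Lemma leq_ratio_scale N B m a d j : 0 < d -> a < j -> d * j <= m ->
  N * (m - a * d) <= m * B -> N * (j - a) <= j * B.
Proof.
move=> d_gt0 lt_aj le_djm le_NB.
have pos : 0 < m - a * d.
  by rewrite subn_gt0 (leq_trans _ le_djm) // [d * j]mulnC ltn_pmul2r.
have le_mj : m * (j - a) <= j * (m - a * d).
  rewrite !mulnBr [j * m]mulnC leq_sub2l // mulnCA [m * a]mulnC leq_mul2l.
  by rewrite [j * d]mulnC le_djm orbT.
rewrite -(leq_pmul2r pos) mulnAC (leq_trans (leq_mul le_NB (leqnn (j - a)))) //.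
by rewrite mulnAC [j * B * _]mulnAC leq_mul2r le_mj orbT.
Qed.

Section Robust.

Variable V : finType.
Implicit Types (C G : {set {set V}}).

Definition merging_edges G C : {set {set V}} :=
  [set e in G | ncomp (e |: C) < ncomp C].

Definition robust (d : nat) G : bool :=
  [forall C : {set {set V}},
     (C \subset G) ==> (d * (ncomp C - ncomp G) <= #|merging_edges G C|)].

Lemma ncomp_setD_merging G C :
  C \subset G -> ncomp (G :\: merging_edges G C) = ncomp C.
Proof.
move=> sCG; apply/eqP; rewrite eqn_leq; apply/andP; split.
  apply/ncomp_subset/subsetP => e eC; rewrite !inE (subsetP sCG _ eC) andbT.
  by rewrite (setUidPr _) ?ltnn // sub1set.
apply/ncomp_subrel/hconn_cover => e x y /setDP[eG]; rewrite inE eG -leqNgt /=.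
move=> merge_le xe ye; have sC : C \subset e |: C by apply: subsetUr.
have eqC := ncomp_subrel_eq (hconn_subset sC).
apply: (eqC _ x y); last by apply: (hconn_edge (setU11 e C)).
by apply/eqP; rewrite eqn_leq merge_le ncomp_subset.
Qed.

Lemma exists_robust_subset d G : exists F : {set {set V}},
  [/\ F \subset G, robust d (G :\: F) & #|F| <= d * (ncomp (G :\: F) - ncomp G)].
Proof.
have [n] := ubnP (#|V| - ncomp G); elim: n G => // n IHn G lt_n.
have [rG | /forallPn[C]] := boolP (robust d G).
  by exists set0; rewrite sub0set setD0 rG cards0.
rewrite negb_imply -ltnNge => /andP[sCG few].
have lt_GC : ncomp G < ncomp C.
  by rewrite -subn_gt0 lt0n; apply: contraTneq few => ->; rewrite muln0.
set M := merging_edges G C in few.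
have [|F [sF rF cardF]] := IHn (G :\: M).
  rewrite ncomp_setD_merging //; move: (ncomp_leq_card C) lt_GC lt_n.
  by move: (ncomp C) (ncomp G) #|V| => c g v; lia.
rewrite ncomp_setD_merging // in cardF.
have le_CF : ncomp C <= ncomp (G :\: M :\: F).
  by rewrite -(ncomp_setD_merging sCG) ncomp_subset ?subsetDl.
exists (M :|: F); rewrite -setDDl; split => //.
  rewrite subUset (subset_trans sF) ?subsetDl ?andbT //.
  by apply/subsetP => e /setIdP[].
rewrite (_ : _ - _ = (ncomp C - ncomp G) + (ncomp (G :\: M :\: F) - ncomp C)).
  by rewrite mulnDr (leq_trans (leq_card_setU _ _)) // leq_add // ltnW.
by move: le_CF lt_GC; move: (ncomp C) (ncomp G) (ncomp _) => c g x; lia.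
Qed.

Lemma card_cuts_avoiding_robust d a G C : robust d G -> 0 < d -> C \subset G ->
  #|cuts_avoiding G (a * d) C| <= cut_bound a (ncomp C - ncomp G).
Proof.
move=> rG d_gt0; have [n] := ubnP (ncomp C - ncomp G).
elim: n C => // n IHn C lt_n sCG; set j := ncomp C - ncomp G in lt_n *.
have [le_ja | lt_aj] := leqP j a.
  exact: leq_trans (card_cuts_avoiding_le_exp _ sCG) (leq_exp_cut_bound le_ja).
set M := merging_edges G C.
have many : d * j <= #|M| by move/forallP/(_ C): rG; rewrite sCG.
have IHe e : e \in M -> #|cuts_avoiding G (a * d) (e |: C)| <= cut_bound a j.-1.
  case/setIdP=> eG merge; have sCe : e |: C \subset G by rewrite subUset sub1set eG.
  have le_j : ncomp (e |: C) - ncomp G <= j.-1.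
    rewrite /j; move: merge; move: (ncomp (e |: C)) (ncomp C) (ncomp G).
    by move=> x c g; lia.
  apply: leq_trans (IHn _ _ sCe) (cut_bound_homo a le_j).
  by move: (ncomp (e |: C) - _) le_j => x; clearbody j; lia.
have sum_le : \sum_(e in M) #|cuts_avoiding G (a * d) (e |: C)|
              <= #|M| * cut_bound a j.-1.
  by rewrite -sum_nat_const leq_sum.
have := leq_ratio_scale d_gt0 lt_aj many
  (leq_trans (cuts_avoiding_double_count G (a * d) C M) sum_le).
by rewrite cut_bound_rec // mulnC leq_pmul2l ?subn_gt0.
Qed.

End Robust.

Theorem theorem1p3 (V : finType) (E : {set {set V}}) (k d : nat) :
  #|V| = k -> 2 <= k -> 1 <= d ->
  exists F : {set {set V}},
    [/\ F \subset E, #|F| <= k * d &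
        forall alpha : nat, 1 <= alpha ->
          #|small_cuts (E :\: F) (alpha * d)| <= (2 * k) ^ (2 * alpha)].
Proof.
move=> card_V k_ge2 d_gt0.
have [F [sFE rF card_F]] := exists_robust_subset d E.
have le_k (A B : {set {set V}}) : ncomp A - ncomp B <= k.
  by rewrite -card_V (leq_trans (leq_subr _ _) (ncomp_leq_card A)).
exists F; split => // [|alpha _].
  by rewrite (leq_trans card_F) // mulnC leq_mul2r le_k orbT.
rewrite -cuts_avoiding0.
apply: leq_trans (card_cuts_avoiding_robust _ rF d_gt0 (sub0set _)) _.
exact: cut_bound_leq (le_k _ _) (ltnW k_ge2).
Qed.
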